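(* Let $f:\mathcal{X}\to\mathbb{R}$ be any function, let $\varphi:\mathcal{X}\to\mathcal{X}$ be any map, and let $\mathcal{A}\subset\mathcal{X}$ be a finite set such that $D:=\sum_{x\in\mathcal{A}}|f(\varphi(x))-f(x)|^2\neq 0$. Define $$WCM(\varphi;f):=1-\sqrt{\frac{\min_{\pi\in \Pi(\mathcal{A})}\sum_{x\in\mathcal{A}}|f(\varphi(\pi(x)))-f(x)|^2}{D}},$$ where $\Pi(\mathcal{A})$ is the set of all permutations (bijections) $\pi:\mathcal{A}\to\mathcal{A}$. Then $WCM(\varphi;f)\in[0,1]$. Moreover: (i) $WCM(\varphi;f)=0$ if and only if the natural pairing $\{(f(x),f(\varphi(x)))\}_{x\in\mathcal{A}}$ maximizes the covariance among all pairings $\{(f(x),f(\varphi(\pi(x))))\}_{x\in\mathcal{A}}$, $\pi\in\Pi(\mathcal{A})$ (equivalently, the identity permutation attains the minimum in the numerator); (ii) $WCM(\varphi;f)=1$ if and only if there exists a permutation $\pi\in\Pi(\mathcal{A})$ which is not the identity such that $f(x)=f(\varphi(\pi(x)))$ for every $x\in\mathcal{A}$; (iii) for every $\lambda>0$, $WCM(\varphi;f)=WCM(\varphi;\lambda f)$.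
   Context: Here $f$ plays the role of a fixed black-box real-valued predictor, $\varphi$ a perturbation of inputs, and $\mathcal{A}$ a finite auditing set; $WCM$ is called the Wasserstein Coherence Metric. *)

From HB Require Import structures.
From mathcomp Require Import all_boot all_order all_algebra all_fingroup.
From mathcomp Require Import finmap.
Set Implicit Arguments. Unset Strict Implicit. Unset Printing Implicit Defensive.
Import Order.TTheory GRing.Theory Num.Theory.
Local Open Scope ring_scope.
Local Open Scope fset_scope.

Section WCM.
Variables (R : rcfType) (X : choiceType).
Implicit Types (f : X -> R) (phi : X -> X) (A : {fset X}).

Definition wcm_cost f phi A (p : {perm A}) : R :=
  \sum_(x : A) (f (phi (val (p x))) - f (val x)) ^+ 2.

Definition wcm_D f phi A : R := wcm_cost f phi (1%g : {perm A}).

(* minimum over all permutations of A (the identity is among them) *)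
Definition wcm_min f phi A : R :=
  \big[Num.min/wcm_D f phi A]_(p : {perm A}) wcm_cost f phi p.

Definition WCM f phi A : R := 1 - Num.sqrt (wcm_min f phi A / wcm_D f phi A).

Definition pairing_cov f phi A (p : {perm A}) : R :=
  let n := (#|{: A}|)%:R in
  (\sum_(x : A) f (val x) * f (phi (val (p x)))) / n
  - ((\sum_(x : A) f (val x)) / n) * ((\sum_(x : A) f (phi (val (p x)))) / n).

End WCM.

From HB Require Import structures.
From mathcomp Require Import all_boot all_order all_algebra all_fingroup.
From mathcomp Require Import finmap.
From mathcomp Require Import ring.
Set Implicit Arguments. Unset Strict Implicit. Unset Printing Implicit Defensive.
Import Order.TTheory GRing.Theory Num.Theory.
Local Open Scope ring_scope.
Local Open Scope fset_scope.

(* Expanding the square, the cost of a pairing p is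
   sum (f o phi)^2 + sum f^2 - 2 sum f (f o phi o p), and the two squared sums,
   like the means entering the covariance, do not depend on p.  Hence minimising
   the cost is maximising the cross term, i.e. the covariance.  The ratio
   min / D lies in [0, 1]; WCM = 0 when the identity is optimal, and WCM = 1
   when some pairing has cost 0, a pairing which cannot be the identity since
   D <> 0.  Scaling f by lam multiplies every cost by lam^2, which cancels in
   the ratio. *)

Section OneSubSqrtRatio.
Variables (R : rcfType) (m D : R).
Hypotheses (D_gt0 : 0 < D) (m_ge0 : 0 <= m) (m_leD : m <= D).

Let ratio_ge0 : 0 <= m / D. Proof. by rewrite divr_ge0 // ltW. Qed.

Lemma one_sub_sqrt_ratio_itv : 0 <= 1 - Num.sqrt (m / D) <= 1.
Proof.
rewrite subr_ge0 lerBlDr lerDl sqrtr_ge0 andbT.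
by rewrite -(sqrtr1 R) ler_sqrt // ler_pdivrMr // mul1r.
Qed.

Lemma one_sub_sqrt_ratio_eq0 : 1 - Num.sqrt (m / D) = 0 <-> m = D.
Proof.
split=> [/eqP|->]; last by rewrite divff ?gt_eqF // sqrtr1 subrr.
rewrite subr_eq0 eq_sym -(sqrtr1 R) eqr_sqrt // => /eqP/(congr1 ( *%R^~ D)).
by rewrite mulfVK ?gt_eqF // mul1r.
Qed.

Lemma one_sub_sqrt_ratio_eq1 : 1 - Num.sqrt (m / D) = 1 <-> m = 0.
Proof.
split=> [|->]; last by rewrite mul0r sqrtr0 subr0.
move=> /eqP; rewrite subr_eq addrC -subr_eq subrr eq_sym sqrtr_eq0.
by rewrite ler_pdivrMr // mul0r => m_le0; apply/eqP; rewrite eq_le m_le0 m_ge0.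
Qed.

End OneSubSqrtRatio.

Section PairingCost.
Variables (R : rcfType) (X : choiceType) (f : X -> R) (phi : X -> X).
Variable A : {fset X}.

Lemma wcm_cost_ge0 (p : {perm A}) : 0 <= wcm_cost f phi p.
Proof. by apply: sumr_ge0 => x _; apply: sqr_ge0. Qed.

Lemma wcm_cost1 : wcm_cost f phi (1%g : {perm A}) = wcm_D f phi A.
Proof. by []. Qed.

Lemma wcm_cost_eq0 (p : {perm A}) :
  wcm_cost f phi p = 0 <-> forall x : A, f (val x) = f (phi (val (p x))).
Proof.
split=> [cost0 x|fE]; last by apply: big1 => x _; rewrite -fE subrr expr0n.
have /eqP := psumr_eq0P (fun x _ => sqr_ge0 (f (phi (val (p x))) - f (val x)))
  cost0 (i := x) erefl.
by rewrite sqrf_eq0 subr_eq0 => /eqP.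
Qed.

Lemma sum_perm (F : A -> R) (p : {perm A}) : \sum_(x : A) F (p x) = \sum_(x : A) F x.
Proof. by rewrite [RHS](reindex_inj (@perm_inj _ p)). Qed.

Lemma wcm_costE (p : {perm A}) : wcm_cost f phi p =
  \sum_(x : A) f (phi (val x)) ^+ 2 + \sum_(x : A) f (val x) ^+ 2
  - 2 * \sum_(x : A) f (val x) * f (phi (val (p x))).
Proof.
rewrite /wcm_cost -(sum_perm (fun x => f (phi (val x)) ^+ 2) p).
rewrite mulr_sumr -sumrN -!big_split /=.
by apply: eq_bigr => x _; ring.
Qed.

Lemma pairing_cov_le1 (p : {perm A}) : (0 < #|{: A}|)%N ->
  (pairing_cov f phi p <= pairing_cov f phi (1%g : {perm A})) =
  (wcm_cost f phi (1%g : {perm A}) <= wcm_cost f phi p).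
Proof.
rewrite -(ltr0n R) => card_gt0.
rewrite /pairing_cov !(sum_perm (fun x => f (phi (val x)))) !wcm_costE.
by rewrite lerD2r ler_pM2r ?invr_gt0 // lerD2l lerN2 ler_pM2l.
Qed.

Lemma wcm_D_neq0_card_gt0 : wcm_D f phi A != 0 -> (0 < #|{: A}|)%N.
Proof.
apply: contraNT; rewrite -eqn0Ngt => /eqP/card0_eq A0.
by apply/eqP/big1 => x; have := A0 x; rewrite !inE.
Qed.

Lemma wcm_min_le (p : {perm A}) : wcm_min f phi A <= wcm_cost f phi p.
Proof. exact: bigmin_le. Qed.

Lemma wcm_min_attained : exists p : {perm A}, wcm_min f phi A = wcm_cost f phi p.
Proof.
apply: (big_ind (fun y => exists p : {perm A}, y = wcm_cost f phi p)).
- by exists 1%g.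
- by move=> _ _ [p ->] [q ->]; rewrite /Num.min; case: ifP; [exists p|exists q].
- by move=> p _; exists p.
Qed.

Lemma wcm_min_ge0 : 0 <= wcm_min f phi A.
Proof. by have [p ->] := wcm_min_attained; apply: wcm_cost_ge0. Qed.

Lemma wcm_min_eqD : wcm_min f phi A = wcm_D f phi A <->
  forall p : {perm A}, wcm_cost f phi (1%g : {perm A}) <= wcm_cost f phi p.
Proof.
rewrite wcm_cost1; split=> [<-|D_min]; first exact: wcm_min_le.
have [p min_p] := wcm_min_attained.
by apply/eqP; rewrite eq_le -wcm_cost1 wcm_min_le min_p D_min.
Qed.

Lemma wcm_min_eq0 : wcm_min f phi A = 0 <-> exists p : {perm A}, wcm_cost f phi p = 0.
Proof.
split=> [|[p cost0]]; first by have [p ->] := wcm_min_attained; exists p.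
by apply/eqP; rewrite eq_le wcm_min_ge0 -cost0 wcm_min_le.
Qed.

Lemma wcm_cost_scale (lam : R) (p : {perm A}) :
  wcm_cost (fun x => lam * f x) phi p = lam ^+ 2 * wcm_cost f phi p.
Proof. by rewrite /wcm_cost mulr_sumr; apply: eq_bigr => x _; ring. Qed.

Lemma wcm_min_scale (lam : R) :
  wcm_min (fun x => lam * f x) phi A = lam ^+ 2 * wcm_min f phi A.
Proof.
apply: (big_ind2 (fun a b => a = lam ^+ 2 * b)) => [||p _]; try exact: wcm_cost_scale.
by move=> a1 b1 a2 b2 -> ->; rewrite minr_pMr // sqr_ge0.
Qed.

Lemma WCM_scale (lam : R) : lam != 0 -> WCM f phi A = WCM (fun x => lam * f x) phi A.
Proof.
move=> lam_neq0; rewrite /WCM wcm_min_scale /wcm_D wcm_cost_scale -mulf_div.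
by rewrite divff ?mul1r // sqrf_eq0.
Qed.

End PairingCost.

Theorem proposition2 (R : rcfType) (X : choiceType) (f : X -> R) (phi : X -> X)
    (A : {fset X}) :
  wcm_D f phi A != 0 ->
  [/\ 0 <= WCM f phi A <= 1,
      (WCM f phi A = 0 <->
         (forall p : {perm A}, pairing_cov f phi p <= pairing_cov f phi (1%g : {perm A}))),
      (WCM f phi A = 0 <->
         (forall p : {perm A}, wcm_cost f phi (1%g : {perm A}) <= wcm_cost f phi p)),
      (WCM f phi A = 1 <->
         (exists p : {perm A}, p != 1%g /\ forall x : A, f (val x) = f (phi (val (p x)))))
    & (forall lam : R, 0 < lam -> WCM f phi A = WCM (fun x => lam * f x) phi A)].
Proof.
move=> D_neq0.
have D_gt0 : 0 < wcm_D f phi A by rewrite lt0r D_neq0 -wcm_cost1 wcm_cost_ge0.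
have m_ge0 : 0 <= wcm_min f phi A by exact: wcm_min_ge0.
have m_leD : wcm_min f phi A <= wcm_D f phi A by rewrite -wcm_cost1 wcm_min_le.
have WCM0 : WCM f phi A = 0 <->
    forall p : {perm A}, wcm_cost f phi (1%g : {perm A}) <= wcm_cost f phi p.
  by rewrite -wcm_min_eqD; apply: one_sub_sqrt_ratio_eq0.
split=> //.
- exact: one_sub_sqrt_ratio_itv.
- rewrite WCM0; have card_gt0 := wcm_D_neq0_card_gt0 D_neq0.
  by split=> le_p p; [rewrite pairing_cov_le1 | rewrite -pairing_cov_le1].
- rewrite /WCM one_sub_sqrt_ratio_eq1 // wcm_min_eq0.
  split=> [[p cost0]|[p [_ /(wcm_cost_eq0 f phi) cost0]]]; last by exists p.
  exists p; split; last exact/(wcm_cost_eq0 f phi).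
  by apply: contraNneq D_neq0 => p1; rewrite -wcm_cost1 -p1 cost0.
- by move=> lam /gt_eqF/negbT; apply: WCM_scale.
Qed.
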